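(* Let $G$ be a digraph. (a) Every allowed elementary path $\alpha$ in $G$ can be written as a concatenation $$\alpha=\beta_1*\gamma_1*\beta_2*\gamma_2*\cdots*\beta_{k-1}*\gamma_{k-1}*\beta_k$$ of simplicial allowed elementary paths $\beta_i$ (each $\beta_i$ possibly a single vertex) and directed loops $\gamma_i$; this decomposition is uniquely determined by the following algorithm: writing $\alpha=v_0\cdots v_n$, if all $v_i$ are distinct put $\alpha=\beta_1$; otherwise let $i_1$ be the smallest index such that $v_{i_1}=v_{j_1}$ for some $j_1<i_1$, put $\beta_1=v_0\cdots v_{j_1}$, $\gamma_1=v_{j_1}v_{j_1+1}\cdots v_{i_1}$, and apply the same procedure to $v_{i_1}v_{i_1+1}\cdots v_n$. (b) If $f$ is a discrete Morse function on $G$ and $\alpha$ is non-critical, then in the decomposition of (a) some $\beta_i$ is non-critical.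
   Context: A digraph $G=(V,E)$ consists of a set $V$ and $E\subseteq(V\times V)\setminus\{(v,v)\}$; $(u,v)\in E$ is written $u\to v$. An allowed elementary $n$-path is a sequence $v_0\cdots v_n$ of vertices with $v_{i-1}\to v_i\in E$ for $1\le i\le n$; it is simplicial if all its vertices are distinct. A directed loop is an allowed elementary path $v_0v_1\cdots v_nv_0$ with $n\ge1$. The concatenation of $v_0\cdots v_p$ and $w_0\cdots w_q$ is $v_0\cdots v_pw_1\cdots w_q$ if $v_p=w_0$ (and $0$ otherwise). For allowed elementary paths, $\gamma'<\gamma$ (or $\gamma>\gamma'$) means $\gamma'$ is obtained from $\gamma$ by deleting some entries. A map $f:V\to[0,+\infty)$ is a discrete Morse function on $G$ if for every allowed elementary path $v_0\cdots v_n$: (i) there is at most one index $i$ with $f(v_i)=0$ such that $v_0\cdots v_{i-1}v_{i+1}\cdots v_n$ is an allowed elementary $(n-1)$-path; (ii) there is at most one vertex $u$ with $f(u)=0$ such that for some $-1\le j\le n$ the sequence $v_0\cdots v_juv_{j+1}\cdots v_n$ (meaning $uv_0\cdots v_n$ if $j=-1$, $v_0\cdots v_nu$ if $j=n$) is an allowed elementary $(n+1)$-path. Set $f(v_0\cdots v_n)=\sum_if(v_i)$. An allowed elementary $n$-path $\gamma$ is critical if there is no allowed elementary $(n-1)$-path $\beta<\gamma$ with $f(\beta)=f(\gamma)$ and no allowed elementary $(n+1)$-path $\alpha>\gamma$ with $f(\alpha)=f(\gamma)$; otherwise it is non-critical. *)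

From mathcomp Require Import all_boot all_order all_algebra.
From mathcomp Require Import reals.
Set Implicit Arguments. Unset Strict Implicit. Unset Printing Implicit Defensive.
Import Order.TTheory GRing.Theory Num.Theory.


(* A digraph on the vertex type V is given by an edge relation e : rel V,
   assumed irreflexive (no self loops) in the theorem.
   An allowed elementary n-path v_0 ... v_n is a sequence of n+1 vertices
   with consecutive entries joined by edges. *)
Section Digraph.
Variable V : eqType.
Variable e : rel V.

Definition allowed (p : seq V) : bool :=
  if p is x :: s then path e x s else false.

Definition simplicial (p : seq V) : bool := allowed p && uniq p.

Definition directed_loop (p : seq V) : bool :=
  if p is x :: s then [&& allowed p, 3 <= size p & last x s == x] else false.

(* concatenation v_0..v_p * w_0..w_q = v_0..v_p w_1..w_q if v_p = w_0, else 0 (None) *)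
Definition concat (p q : seq V) : option (seq V) :=
  match p, q with
  | x :: s, y :: t => if last x s == y then Some (p ++ t) else None
  | _, _ => None
  end.

Fixpoint concat_all (ps : seq (seq V)) : option (seq V) :=
  match ps with
  | [::] => None
  | [:: p] => Some p
  | p :: ps' => obind (concat p) (concat_all ps')
  end.

(* One step of the algorithm: scanning v_0 v_1 ..., find the smallest i1 with
   v_{i1} = v_{j1} for some j1 < i1; return (beta_1, gamma_1, rest) where
   beta_1 = v_0..v_{j1}, gamma_1 = v_{j1}..v_{i1}, rest = v_{i1}..v_n.
   [pre] holds v_0..v_{i-1}. *)
Fixpoint split_loop (pre s : seq V) : option (seq V * seq V * seq V) :=
  match s with
  | [::] => None
  | x :: s' =>
      if x \in pre then
        let j := index x pre in
        Some (take j.+1 pre, drop j pre ++ [:: x], x :: s')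
      else split_loop (rcons pre x) s'
  end.

Fixpoint decomp_fuel (n : nat) (p : seq V) : seq (seq V * seq V) * seq V :=
  match n with
  | 0 => ([::], p)
  | n'.+1 =>
      match split_loop [::] p with
      | None => ([::], p)
      | Some (b, g, r) =>
          let (ps, bk) := decomp_fuel n' r in ((b, g) :: ps, bk)
      end
  end.

(* The decomposition of the paper: ([:: (beta_1,gamma_1); ...;
   (beta_{k-1},gamma_{k-1})], beta_k). Each step strictly shortens the
   remaining path, so size p steps of fuel suffice. *)
Definition decomp (p : seq V) : seq (seq V * seq V) * seq V :=
  decomp_fuel (size p) p.

Definition decomp_pieces (p : seq V) : seq (seq V) :=
  flatten [seq [:: bg.1; bg.2] | bg <- (decomp p).1] ++ [:: (decomp p).2].

Definition decomp_betas (p : seq V) : seq (seq V) :=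
  [seq bg.1 | bg <- (decomp p).1] ++ [:: (decomp p).2].

Variable R : realType.
Variable f : V -> R.

Definition fpath (p : seq V) : R := (\sum_(v <- p) f v)%R.

(* deleting the entry at index i ; inserting u at position k (0 <= k <= size p,
   k = 0 meaning u v_0 ... v_n, k = size p meaning v_0 ... v_n u) *)
Definition del_at (i : nat) (p : seq V) : seq V := take i p ++ drop i.+1 p.
Definition ins_at (k : nat) (u : V) (p : seq V) : seq V := take k p ++ u :: drop k p.

Definition morse_cond_i : Prop :=
  forall (x : V) (s : seq V), allowed (x :: s) ->
  forall i j : nat, (i < size (x :: s))%N -> (j < size (x :: s))%N ->
    f (nth x (x :: s) i) = 0%R -> allowed (del_at i (x :: s)) ->
    f (nth x (x :: s) j) = 0%R -> allowed (del_at j (x :: s)) ->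
    i = j.

Definition morse_cond_ii : Prop :=
  forall p : seq V, allowed p ->
  forall u w : V,
    f u = 0%R -> (exists2 k, (k <= size p)%N & allowed (ins_at k u p)) ->
    f w = 0%R -> (exists2 k, (k <= size p)%N & allowed (ins_at k w p)) ->
    u = w.

Definition discrete_morse : Prop :=
  (forall v, (0 <= f v)%R) /\ morse_cond_i /\ morse_cond_ii.

(* gamma' < gamma : gamma' is obtained from gamma by deleting some entries *)
Definition critical (g : seq V) : Prop :=
  ~ (exists b, [/\ allowed b, size b = (size g).-1, subseq b g & fpath b = fpath g])
  /\ ~ (exists a, [/\ allowed a, size a = (size g).+1, subseq g a & fpath a = fpath g]).

End Digraph.

From Pilot Require Import Defs.
From mathcomp Require Import all_boot all_order all_algebra.
From mathcomp Require Import reals.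
From mathcomp Require Import lra zify.
From Stdlib Require Import Classical_Prop.
Set Implicit Arguments. Unset Strict Implicit. Unset Printing Implicit Defensive.
Import Order.TTheory GRing.Theory Num.Theory.

(* Cutting an allowed path at its first repeated vertex x writes it as c x | x d x | x s with
   c x d duplicate-free; induction on the remaining path x s gives (a).
   For (b): the weight of a path is the sum of the weights of its vertices, so a path is
   non-critical iff a vertex of weight zero can be deleted from it or inserted into it
   keeping it allowed.  Condition (i) forbids vertices of weight zero on a directed loop,
   since both copies of the base point of the loop could then be deleted.  Hence the vertex
   deleted from or inserted into alpha = beta_1 * gamma_1 * (x s) cannot involve gamma_1,
   so beta_1 or x s is non-critical, and induction concludes.  Only condition (i) is used. *)

Section Surgery.
Variable V : eqType.
Implicit Types (p q : seq V) (u : V).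

Lemma dropl_cat n p q : n <= size p -> drop n (p ++ q) = drop n p ++ q.
Proof. by rewrite drop_cat; case: ltngtP => // -> _; rewrite subnn drop0 drop_size. Qed.

Lemma del_at_catl i p q : i < size p -> del_at i (p ++ q) = del_at i p ++ q.
Proof. by move=> lt_ip; rewrite /del_at takel_cat 1?ltnW // dropl_cat // catA. Qed.

Lemma del_at_catr i p q : del_at (size p + i) (p ++ q) = p ++ del_at i q.
Proof.
by rewrite /del_at take_cat drop_cat !ltnNge leq_addr -addnS leq_addr /= !addKn catA.
Qed.

Lemma ins_at_catl i u p q : i <= size p -> ins_at i u (p ++ q) = ins_at i u p ++ q.
Proof. by move=> le_ip; rewrite /ins_at takel_cat // dropl_cat // -catA. Qed.

Lemma ins_at_catr i u p q : ins_at (size p + i) u (p ++ q) = p ++ ins_at i u q.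
Proof. by rewrite /ins_at take_cat drop_cat ltnNge leq_addr /= addKn catA. Qed.

Lemma ins_atS i u x p : ins_at i.+1 u (x :: p) = x :: ins_at i u p.
Proof. by []. Qed.

Lemma size_del_at i p : i < size p -> size (del_at i p) = (size p).-1.
Proof.
by move=> lt_ip; rewrite /del_at size_cat size_take size_drop lt_ip; lia.
Qed.

Lemma size_ins_at i u p : size (ins_at i u p) = (size p).+1.
Proof. by rewrite /ins_at size_cat /= addnS -size_cat cat_take_drop. Qed.

Lemma del_at_subseq i p : subseq (del_at i p) p.
Proof.
rewrite -{2}(cat_take_drop i p) /del_at; apply: cat_subseq => //.
by rewrite -add1n -drop_drop drop_subseq.
Qed.

Lemma ins_at_supseq i u p : subseq p (ins_at i u p).
Proof.
by rewrite -{1}(cat_take_drop i p) /ins_at; apply: cat_subseq => //; exact: subseq_cons.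
Qed.

Lemma subseq_del_at p q : subseq q p -> size q = (size p).-1 -> 0 < size p ->
  exists2 i, i < size p & q = del_at i p.
Proof.
elim: p q => [|x p IH] [|y q] //=.
  by case: p {IH} => // _ _ _; exists 0.
case: eqP => [<-|_] sub_qp size_qp _.
  have [||i lt_ip ->] := IH q sub_qp; [by rewrite -size_qp.. | by exists i.+1].
exists 0 => //; rewrite /del_at /=; apply/eqP.
by rewrite drop0 -(size_subseq_leqif sub_qp).2 /= size_qp.
Qed.

Lemma ins_at_del_at i x0 p : i < size p -> ins_at i (nth x0 p i) (del_at i p) = p.
Proof.
move=> lt_ip; rewrite /ins_at /del_at take_size_cat ?size_take ?lt_ip //.
by rewrite drop_size_cat ?size_take ?lt_ip // -drop_nth // cat_take_drop.
Qed.

End Surgery.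

Section Decomposition.
Variable V : eqType.
Implicit Types (p s pre : seq V).

Variant split_loop_spec pre s : option (seq V * seq V * seq V) -> Prop :=
| SplitLoopNone of uniq (pre ++ s) : split_loop_spec pre s None
| SplitLoopSome c x d t of pre ++ s = c ++ x :: d ++ x :: t & uniq (c ++ x :: d) :
    split_loop_spec pre s (Some (rcons c x, x :: rcons d x, x :: t)).

Lemma split_loopP pre s : uniq pre -> split_loop_spec pre s (split_loop pre s).
Proof.
elim: s pre => [|y s IH] pre uniq_pre /=; first by constructor; rewrite cats0.
case: ifPn => [y_pre|y_notin_pre]; last first.
  have := IH (rcons pre y); rewrite rcons_uniq y_notin_pre uniq_pre => /(_ isT).
  by case=> [|c x d t]; rewrite cat_rcons; constructor.
have lt_y_pre : index y pre < size pre by rewrite index_mem.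
have nth_y_pre : nth y pre (index y pre) = y by rewrite nth_index.
rewrite (take_nth y lt_y_pre) (drop_nth y lt_y_pre) nth_y_pre cats1.
have def_pre := cat_take_drop (index y pre) pre.
rewrite (drop_nth y lt_y_pre) nth_y_pre in def_pre.
by constructor; rewrite ?def_pre // -{1}def_pre -catA.
Qed.

Lemma decomp_fuel_indep n m p : size p <= n -> size p <= m ->
  decomp_fuel n p = decomp_fuel m p.
Proof.
elim: n m p => [|n IH] [|m] [|x p] //= le_pn le_pm.
case: split_loopP => //= c y d t def_p _.
move/(congr1 size): def_p; rewrite /= size_cat /= size_cat /= => size_p.
rewrite (IH m) //=; lia.
Qed.

Lemma decomp_eq p : decomp p =
  if split_loop [::] p is Some (b, g, r) then ((b, g) :: (decomp r).1, (decomp r).2)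
  else ([::], p).
Proof.
case: p => [|x p] //; rewrite {1}/decomp /=.
case: split_loopP => //= c y d t def_p _.
move/(congr1 size): def_p; rewrite /= size_cat /= size_cat /= => size_p.
rewrite /decomp (@decomp_fuel_indep _ (size (y :: t)) (y :: t)) //.
  by case: (decomp_fuel _ _).
by rewrite /=; lia.
Qed.

Lemma decomp_ind (P : seq V -> Prop) :
  (forall p, uniq p -> decomp p = ([::], p) -> P p) ->
  (forall c x d t, uniq (c ++ x :: d) ->
     decomp (c ++ x :: d ++ x :: t) =
       ((rcons c x, x :: rcons d x) :: (decomp (x :: t)).1, (decomp (x :: t)).2) ->
     P (x :: t) -> P (c ++ x :: d ++ x :: t)) ->
  forall p, P p.
Proof.
move=> P_simplicial P_loop p; elim: {p}(size p).+1 {-2}p (ltnSn (size p)) => // n IH p.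
rewrite ltnS => size_p; have := decomp_eq p.
case: (@split_loopP [::] p isT) => [uniq_p|c x d t /= def_p uniq_cxd].
  exact: P_simplicial.
rewrite def_p => decomp_p; apply: P_loop => //; apply: IH.
by move: size_p; rewrite def_p size_cat /= size_cat /=; lia.
Qed.

End Decomposition.

Section Allowed.
Variables (V : eqType) (e : rel V).
Implicit Types (p q : seq V).

Lemma allowed_catl p q : p != [::] -> allowed e (p ++ q) -> allowed e p.
Proof. by case: p => [|x p] //= _; rewrite cat_path => /andP[]. Qed.

Lemma allowed_catr p q : q != [::] -> allowed e (p ++ q) -> allowed e q.
Proof.
case: q => [|y q] // _; case: p => [|x p] //=.
by rewrite cat_path => /andP[_] /= /andP[].
Qed.

Section Loop.
Variables (c d s : seq V) (x : V).
Hypothesis loop_allowed : allowed e (c ++ x :: d ++ x :: s).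

Lemma allowed_loop_prefix : allowed e (rcons c x).
Proof.
by apply: (@allowed_catl _ (d ++ x :: s)); rewrite ?cat_rcons // -size_eq0 size_rcons.
Qed.

Lemma allowed_loop_suffix : allowed e (x :: s).
Proof. by apply: (@allowed_catr (c ++ x :: d)); rewrite -?catA. Qed.

Lemma loop_path : path e x (rcons d x).
Proof.
have : allowed e (c ++ (x :: rcons d x) ++ s) by rewrite /= cat_rcons.
by move/allowed_catr => /(_ isT) /allowed_catl; apply.
Qed.

End Loop.

Lemma concat_all_cons p (ps : seq (seq V)) q :
  concat_all ps = Some q -> concat_all (p :: ps) = concat p q.
Proof. by case: ps => // p' ps' /= ->. Qed.

Lemma concat_rcons (c t : seq V) x : concat (rcons c x) (x :: t) = Some (rcons c x ++ t).
Proof. by case: c => [|y c] /=; rewrite ?last_rcons eqxx. Qed.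

Lemma decomp_correct : irreflexive e -> forall alpha, allowed e alpha ->
  concat_all (decomp_pieces alpha) = Some alpha /\
  (forall bg, bg \in (decomp alpha).1 -> simplicial e bg.1 /\ directed_loop e bg.2) /\
  simplicial e (decomp alpha).2.
Proof.
move=> e_irr; elim/decomp_ind=> [p uniq_p decomp_p p_allowed|].
  by rewrite /decomp_pieces decomp_p /simplicial p_allowed uniq_p.
move=> c x d t uniq_cxd decomp_p IH alpha_allowed.
have [IH_concat [IH_loops IH_last]] := IH (allowed_loop_suffix alpha_allowed).
have pieces_eq : decomp_pieces (c ++ x :: d ++ x :: t) =
    [:: rcons c x, x :: rcons d x & decomp_pieces (x :: t)].
  by rewrite /decomp_pieces decomp_p.
have loop_concat : concat_all [:: x :: rcons d x & decomp_pieces (x :: t)] =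
    Some (x :: rcons d x ++ t).
  by rewrite (concat_all_cons _ IH_concat) -rcons_cons concat_rcons.
split; first by rewrite pieces_eq (concat_all_cons _ loop_concat) concat_rcons !cat_rcons.
rewrite decomp_p; split=> // bg; rewrite in_cons => /predU1P[-> /= | ]; last exact: IH_loops.
have loop_xd := loop_path alpha_allowed.
split; last first.
  apply/and3P; split=> //; last by rewrite last_rcons.
  by case: (d) loop_xd => [|y d'] /=; rewrite ?e_irr ?size_rcons.
rewrite /simplicial (allowed_loop_prefix alpha_allowed) /= -cats1.
by move: uniq_cxd; rewrite -cat1s catA cat_uniq => /andP[].
Qed.

End Allowed.

Section Morse.
Variables (V : eqType) (e : rel V) (R : realType) (f : V -> R).
Implicit Types (p : seq V) (u : V).
Local Open Scope ring_scope.
(* Qualified, as a bare [fpath] is the function-path notation of [path]. *)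
Local Notation weight := (Defs.fpath f).

Lemma fpath_cat p q : weight (p ++ q) = weight p + weight q.
Proof. exact: big_cat. Qed.

Lemma fpath_cons u p : weight (u :: p) = f u + weight p.
Proof. exact: big_cons. Qed.

Lemma fpath_del_at i x0 p : (i < size p)%N ->
  weight p = weight (del_at i p) + f (nth x0 p i).
Proof.
move=> lt_ip; rewrite -{1}(cat_take_drop i p) (drop_nth x0 lt_ip).
by rewrite !fpath_cat fpath_cons (addrC (f _)) addrA.
Qed.

Lemma fpath_ins_at i u p : weight (ins_at i u p) = weight p + f u.
Proof.
by rewrite -{2}(cat_take_drop i p) !fpath_cat fpath_cons (addrC (f _)) addrA.
Qed.

Definition has_zero_face p :=
  exists i x0, [/\ (i < size p)%N, f (nth x0 p i) = 0 & allowed e (del_at i p)].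

Definition has_zero_coface p :=
  exists i u, [/\ (i <= size p)%N, f u = 0 & allowed e (ins_at i u p)].

Lemma has_zero_face_of_fpath_eq p b : allowed e b -> size b = (size p).-1 -> subseq b p ->
  weight b = weight p -> has_zero_face p.
Proof.
move=> b_allowed size_b sub_bp fb; have x0 : V by case: (b) b_allowed.
have lt0p : (0 < size p)%N by move: size_b; case: (b) b_allowed => //= *; lia.
have [i lt_ip def_b] := subseq_del_at sub_bp size_b lt0p.
exists i, x0; split; rewrite -?def_b //.
by move: fb; rewrite (fpath_del_at x0 lt_ip) -def_b; lra.
Qed.

Lemma has_zero_coface_of_fpath_eq p a : allowed e a -> size a = (size p).+1 -> subseq p a ->
  weight a = weight p -> has_zero_coface p.
Proof.
move=> a_allowed size_a sub_pa fa; have x0 : V by case: (a) a_allowed.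
have [i lt_ia def_p] : exists2 i, (i < size a)%N & p = del_at i a.
  by apply: subseq_del_at; rewrite ?size_a.
have def_a : ins_at i (nth x0 a i) p = a by rewrite def_p ins_at_del_at.
exists i, (nth x0 a i); split; rewrite ?def_a //; first by rewrite -ltnS -size_a.
by move: fa; rewrite -{1}def_a fpath_ins_at; lra.
Qed.

Lemma not_criticalP p : ~ critical e f p <-> has_zero_face p \/ has_zero_coface p.
Proof.
split=> [|[[i [x0 [lt_ip fi0 del_allowed]]]|[i [u [le_ip fu0 ins_allowed]]]] [no_del no_ins]].
- case/not_and_or=> /NNPP[q [q_allowed size_q sub_q fq]].
    by left; apply: has_zero_face_of_fpath_eq q_allowed size_q sub_q fq.
  by right; apply: has_zero_coface_of_fpath_eq q_allowed size_q sub_q fq.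
- apply: no_del; exists (del_at i p); split; rewrite ?size_del_at ?del_at_subseq //.
  by rewrite (fpath_del_at x0 lt_ip) fi0 addr0.
- apply: no_ins; exists (ins_at i u p); split; rewrite ?size_ins_at ?ins_at_supseq //.
  by rewrite fpath_ins_at fu0 addr0.
Qed.

Hypothesis morse_i : morse_cond_i e f.

Lemma loop_head_neq0 x q : path e x (rcons q x) -> f x != 0.
Proof.
move=> loop_xq; apply/eqP => fx0.
have del_first : del_at 0 (x :: rcons q x) = rcons q x by rewrite /del_at /= drop0.
have del_last : del_at (size q).+1 (x :: rcons q x) = x :: q.
  by rewrite /del_at /= -cats1 take_size_cat // drop_oversize ?cats0 // size_cat addn1.
(* Deleting either copy of x leaves an allowed path: two distinct indices for (i). *)
have := morse_i (x := x) (s := rcons q x) loop_xq (i := 0) (j := (size q).+1).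
rewrite del_first del_last /= size_rcons nth_rcons ltnn eqxx => /(_ isT _ fx0 _ fx0).
have tail_allowed : allowed e (rcons q x) by case: (q) loop_xq => //= y q' /andP[].
have path_xq : path e x q by move: loop_xq; rewrite rcons_path => /andP[].
by move/(_ (ltnSn _) tail_allowed path_xq).
Qed.

Lemma loop_vertex_neq0 x q y : path e x (rcons q x) -> y \in x :: rcons q x -> f y != 0.
Proof.
move=> loop_xq y_loop; have /rot_to[k q' rot_xq] : y \in x :: q.
  by move: y_loop; rewrite in_cons mem_rcons => /predU1P[->|]; rewrite ?mem_head.
apply: (@loop_head_neq0 _ q'); rewrite -[path _ _ _]/(cycle e (y :: q')).
by rewrite -rot_xq rot_cycle.
Qed.

Section FirstLoop.
Variables (c d s : seq V) (x : V).
Hypothesis alpha_allowed : allowed e (c ++ x :: d ++ x :: s).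

Lemma first_loop_vertex_neq0 i x0 : (size c <= i <= size c + (size d).+1)%N ->
  f (nth x0 (c ++ x :: d ++ x :: s) i) != 0.
Proof.
case/andP=> le_ci le_i; apply: (loop_vertex_neq0 (loop_path alpha_allowed)).
have -> : c ++ x :: d ++ x :: s = (c ++ x :: rcons d x) ++ s by rewrite -catA /= cat_rcons.
rewrite nth_cat size_cat /= size_rcons addnS ltnS le_i nth_cat ltnNge le_ci /=.
by rewrite mem_nth //= size_rcons; lia.
Qed.

Lemma has_zero_face_first_loop : has_zero_face (c ++ x :: d ++ x :: s) ->
  has_zero_face (rcons c x) \/ has_zero_face (x :: s).
Proof.
case=> i [x0 [lt_i fi0 del_allowed]].
have [lt_ic | le_ci] := ltnP i (size c).
  have lt_i_cx : (i < size (rcons c x))%N by rewrite size_rcons ltnW.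
  move: fi0 del_allowed; rewrite -cat_rcons nth_cat lt_i_cx del_at_catl // => fi0.
  move/allowed_catl => del_allowed; left; exists i, x0; split=> //.
  by apply: del_allowed; rewrite -size_eq0 size_del_at // size_rcons; lia.
have [le_i | lt_i'] := leqP i (size c + (size d).+1).
  by have := @first_loop_vertex_neq0 i x0; rewrite le_ci le_i fi0 eqxx => /(_ isT).
have [k def_i] : exists k, i = (size (c ++ x :: d) + k.+1)%N.
  by exists (i - (size (c ++ x :: d)).+1)%N; rewrite size_cat /=; lia.
move: lt_i fi0 del_allowed; rewrite def_i (catA c (x :: d) (x :: s)).
set P := c ++ x :: d; rewrite size_cat ltn_add2l nth_cat [(_ < size P)%N]ltnNge leq_addr.
rewrite addKn del_at_catr.
move=> lt_k fk0 /allowed_catr del_allowed; right; exists k.+1, x0; split=> //.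
exact: del_allowed.
Qed.

Lemma has_zero_coface_first_loop : has_zero_coface (c ++ x :: d ++ x :: s) ->
  has_zero_coface (rcons c x) \/ has_zero_coface (x :: s).
Proof.
case=> i [u [le_i fu0 ins_allowed]].
have [le_i_cx | lt_cx_i] := leqP i (size c).+1.
  left; exists i, u; split; rewrite ?size_rcons //.
  move: ins_allowed; rewrite -cat_rcons ins_at_catl ?size_rcons //.
  by apply: allowed_catl; rewrite -size_eq0 size_ins_at.
have [lt_i_P | le_P_i] := ltnP i (size (c ++ x :: d)).
  (* u is inserted strictly inside the loop x d x, hence lies on a directed loop. *)
  have [k def_i le_kd] : exists2 k, i = (size c + k.+1)%N & (k <= size d)%N.
    by exists (i - (size c).+1)%N; move: lt_i_P; rewrite size_cat /=; lia.
  move: ins_allowed; rewrite def_i ins_at_catr ins_atS ins_at_catl // => /loop_path loop_u.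
  have u_loop : u \in x :: rcons (ins_at k u d) x.
    by rewrite in_cons mem_rcons in_cons mem_cat in_cons eqxx !orbT.
  by move: (loop_vertex_neq0 loop_u u_loop); rewrite fu0 eqxx.
right; exists (i - size (c ++ x :: d))%N, u; split=> //.
  by move: le_i; rewrite (catA c (x :: d) (x :: s)) size_cat; lia.
move: ins_allowed; rewrite -{1}(subnKC le_P_i) (catA c (x :: d) (x :: s)) ins_at_catr.
by apply: allowed_catr; rewrite -size_eq0 size_ins_at.
Qed.

End FirstLoop.

Lemma decomp_betas_not_critical p : allowed e p -> ~ critical e f p ->
  exists2 beta, beta \in decomp_betas p & ~ critical e f beta.
Proof.
elim/decomp_ind: p => [p _ decomp_p _ ncrit_p | c x d t _ decomp_p IH alpha_allowed].
  by exists p; rewrite // /decomp_betas decomp_p mem_seq1.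
have -> : decomp_betas (c ++ x :: d ++ x :: t) = rcons c x :: decomp_betas (x :: t).
  by rewrite /decomp_betas decomp_p.
move/not_criticalP=> ncrit_alpha.
have [ncrit_c | ncrit_t] : ~ critical e f (rcons c x) \/ ~ critical e f (x :: t).
  rewrite !not_criticalP; case: ncrit_alpha => [/(has_zero_face_first_loop alpha_allowed)|
                      /(has_zero_coface_first_loop alpha_allowed)] [];
  by [left; left | right; left | left; right | right; right].
  by exists (rcons c x); rewrite ?mem_head.
have [beta beta_in ncrit_beta] := IH (allowed_loop_suffix alpha_allowed) ncrit_t.
by exists beta; rewrite // in_cons beta_in orbT.
Qed.

End Morse.

Theorem lemma4p5 (V : eqType) (e : rel V) (R : realType) (f : V -> R) :
  irreflexive e ->
  (* (a) the algorithmic decomposition alpha = beta_1 * gamma_1 * ... * beta_k *)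
  (forall alpha : seq V, allowed e alpha ->
     concat_all (decomp_pieces alpha) = Some alpha /\
     (forall bg, bg \in (decomp alpha).1 ->
        simplicial e bg.1 /\ directed_loop e bg.2) /\
     simplicial e (decomp alpha).2) /\
  (* (b) *)
  (discrete_morse e f ->
   forall alpha : seq V, allowed e alpha -> ~ critical e f alpha ->
     exists2 beta, beta \in decomp_betas alpha & ~ critical e f beta).
Proof.
move=> e_irr; split; first exact: decomp_correct.
by case=> _ [morse_i _]; exact: decomp_betas_not_critical.
Qed.
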